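(* The only rational periodic points of $f(x)=x^2-\tfrac{29}{16}$ are $-\tfrac14,-\tfrac74,\tfrac54$, which form a $3$-cycle. In particular $f$ has exactly $8$ rational points that are periodic or preperiodic.
   Context: A point $x$ is preperiodic for $f$ if some iterate $f^k(x)$, $k\ge1$, is periodic while $x$ itself is not periodic. *)

From mathcomp Require Import all_boot all_order all_algebra.
Set Implicit Arguments. Unset Strict Implicit. Unset Printing Implicit Defensive.
Import Order.TTheory GRing.Theory Num.Theory.
Local Open Scope ring_scope.

Definition periodic (T : Type) (g : T -> T) (x : T) : Prop :=
  exists n : nat, (0 < n)%N /\ iter n g x = x.

Definition preperiodic (T : Type) (g : T -> T) (x : T) : Prop :=
  (exists k : nat, (0 < k)%N /\ periodic g (iter k g x)) /\ ~ periodic g x.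

Definition f (x : rat) : rat := x ^+ 2 - 29%:R / 16%:R.

From mathcomp Require Import all_boot all_order all_algebra.
From mathcomp Require Import zify ring lra.
Set Implicit Arguments. Unset Strict Implicit. Unset Printing Implicit Defensive.
Import Order.TTheory GRing.Theory Num.Theory.
Local Open Scope ring_scope.

(* A point whose forward orbit is invariant for a property P along which some
   measure strictly increases cannot be periodic; hence neither can it be
   preperiodic, since preperiodicity asks some later iterate to be periodic.
   We apply this twice to f(x) = x^2 - 29/16:
   - the measure |x| on the region 2 <= |x| (escape to infinity);
   - the measure denq x on the region denq x <> 4.  Writing x = p/d,
     f(x) = (16p^2 - 29d^2) / (16d^2), and a case analysis on the 2-adic
     valuation of d (0, 1, 2 or >= 3) shows that denq (f x) is a multiple of
     2^k m^2 where m is a large enough factor of d; this forces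
     denq (f x) > d and denq (f x) <> 4.
   So every periodic or preperiodic rational has |x| < 2 and denominator 4,
   leaving the eight candidates (+-1, +-3, +-5, +-7)/4, which are checked by
   computation: three form a 3-cycle, the other five land on it in two steps. *)

Section GrowingMeasure.
Variables (T : Type) (g : T -> T) (P : T -> Prop).
Variables (disp : Order.disp_t) (U : porderType disp) (mu : T -> U).
Hypothesis grow : forall x, P x -> P (g x) /\ (mu x < mu (g x))%O.

Lemma iter_grow x : P x -> forall n, (0 < n)%N ->
  P (iter n g x) /\ (mu x < mu (iter n g x))%O.
Proof.
move=> Px; elim=> [//|[_|n IH] _]; first exact: grow.
have [Pn lt_n] := IH isT; have [Pn1 lt_n1] := grow Pn.
by split=> //; apply: lt_trans lt_n1.
Qed.

Lemma not_periodic_grow x : P x -> ~ periodic g x.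
Proof.
by move=> Px [n [n0 xn]]; have [_] := iter_grow Px n0; rewrite xn ltxx.
Qed.

Lemma eventually_periodic_grow x :
  periodic g x \/ preperiodic g x -> ~ P x.
Proof.
case=> [per Px|[[k [k0 per_k]] _] Px]; first exact: not_periodic_grow per.
by have [Pk _] := iter_grow Px k0; apply: not_periodic_grow per_k.
Qed.
End GrowingMeasure.

Lemma f_escape (x : rat) : 2 <= `|x| -> 2 <= `|f x| /\ `|x| < `|f x|.
Proof.
move=> hx.
have sq_abs : x ^+ 2 = `|x| ^+ 2 by rewrite real_normK // num_real.
have := ler_norm (f x); rewrite /f sq_abs => hf.
split; nra.
Qed.

Lemma coprime_pow2_odd (k : nat) (u : int) :
  (0 < k)%N -> coprimez (2 ^+ k) (u * 2 + 1).
Proof. by move=> k0; rewrite coprimez_pexpl // /coprimez gcdzMDl. Qed.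

Lemma odd_of_coprime_even (p d : int) :
  coprimez p (2 * d) -> exists s, p = s * 2 + 1.
Proof.
move=> cp; exists (p %/ 2)%Z.
have : (p %% 2 = 0 \/ p %% 2 = 1)%Z by lia.
case=> h; last by lia.
have ep : p = 2 * (p %/ 2)%Z by lia.
move: cp; rewrite /coprimez ep -mulz_gcdr => /eqP; lia.
Qed.

(* s^2 + s = s(s+1) is even, so odd squares are 1 modulo 8. *)
Lemma pronic_even (s : int) : exists t, s ^+ 2 + s = t * 2.
Proof.
have [h|h] : s = (s %/ 2)%Z * 2 + 1 \/ s = (s %/ 2)%Z * 2 by lia.
  exists (2 * (s %/ 2)%Z ^+ 2 + 3 * (s %/ 2)%Z + 1); rewrite {1 2}h; ring.
exists (2 * (s %/ 2)%Z ^+ 2 + (s %/ 2)%Z); rewrite {1 2}h; ring.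
Qed.

Lemma coprime_lin_sq (m a w p : int) :
  coprimez m w -> coprimez m p -> coprimez m (a * m + w * p ^+ 2).
Proof.
move=> mw mp; rewrite /coprimez gcdzMDl -/(coprimez _ _) coprimezMr mw.
exact: coprimezXr.
Qed.

Lemma den_multiple (c : int) (k : nat) (m N u b : int) :
  c != 0 -> 0 < m -> 0 < b -> (0 < k)%N -> N = u * 2 + 1 -> coprimez m N ->
  (c * (2 ^+ k * m ^+ 2) %| c * N * b)%Z ->
  exists2 q, 0 < q & b = q * (2 ^+ k * m ^+ 2).
Proof.
move=> c0 m0 b0 k0 eN mN; rewrite -mulrA dvdz_mul2l // Gauss_dvdzr; last first.
  by rewrite coprimezMl {1}eN coprime_pow2_odd //=; apply: coprimezXl.
case/dvdzP=> q eb; exists q => //.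
have : 0 < 2 ^+ k * m ^+ 2 :> int by rewrite mulr_gt0 ?exprn_gt0.
by move: b0; rewrite eb; nia.
Qed.

Lemma le_sq (a m : int) : 0 <= a -> a <= m -> a * m <= m ^+ 2.
Proof. by move=> a0 am; nia. Qed.

Lemma multiple_bound (q M d : int) :
  0 < q -> d < M -> 4 < M -> d < q * M /\ q * M != 4.
Proof. by move=> q0 dM M4; split; [|apply/eqP]; nia. Qed.

(* Numerator of f(p/d) over the common denominator 16 d^2. *)
Definition f_num (p d : int) : int := 16 * p ^+ 2 - 29 * d ^+ 2.

(* The arithmetic heart: for p/d in lowest terms with d <> 4, every b with
   16 d^2 | f_num p d * b (e.g. the denominator of f(p/d)) satisfies
   b > d and b <> 4.  The four lemmas below treat the 2-adic valuations
   0, 1, 2 and >= 3 of d; each exhibits an odd cofactor N of f_num p d. *)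

(* d odd: f_num p d itself is odd, so 16 d^2 divides b. *)
Lemma f_den_val0 (p d b e : int) : 0 < d -> 0 < b -> coprimez p d ->
  d = e * 2 + 1 -> (16 * d ^+ 2 %| f_num p d * b)%Z -> d < b /\ b != 4.
Proof.
move=> d0 b0 pd ed hd.
have N_odd : f_num p d = (8 * p ^+ 2 - 58 * (e ^+ 2 + e) - 15) * 2 + 1.
  by rewrite /f_num ed; ring.
have dN : coprimez d (f_num p d).
  have -> : f_num p d = (-29 * d) * d + 16 * p ^+ 2 by rewrite /f_num; ring.
  apply: coprime_lin_sq; last by rewrite coprimez_sym.
  by rewrite coprimez_sym ed; exact: (@coprime_pow2_odd 4).
have hd1 : (1 * (2 ^+ 4 * d ^+ 2) %| 1 * f_num p d * b)%Z by rewrite !mul1r.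
have [q q0 ->] := @den_multiple 1 4 _ _ _ _ isT d0 b0 isT N_odd dN hd1.
apply: multiple_bound => //; have := @le_sq 1 d isT d0; clear -d0; lia.
Qed.

(* d = 2m, m odd: f_num p d = 4 (4p^2 - 29m^2) with odd cofactor. *)
Lemma f_den_val1 (p d b m e : int) : 0 < d -> 0 < b -> coprimez p d ->
  d = m * 2 -> m = e * 2 + 1 -> (16 * d ^+ 2 %| f_num p d * b)%Z ->
  d < b /\ b != 4.
Proof.
move=> d0 b0 pd ed em hd.
have pm : coprimez p m by move: pd; rewrite ed coprimezMr => /andP[].
have N_odd : 4 * p ^+ 2 - 29 * m ^+ 2 = (2 * p ^+ 2 - 58 * (e ^+ 2 + e) - 15) * 2 + 1.
  by rewrite em; ring.
have mN : coprimez m (4 * p ^+ 2 - 29 * m ^+ 2).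
  have -> : 4 * p ^+ 2 - 29 * m ^+ 2 = (-29 * m) * m + 4 * p ^+ 2 by ring.
  apply: coprime_lin_sq; last by rewrite coprimez_sym.
  by rewrite coprimez_sym em; exact: (@coprime_pow2_odd 2).
have hd4 : (4 * (2 ^+ 4 * m ^+ 2) %| 4 * (4 * p ^+ 2 - 29 * m ^+ 2) * b)%Z.
  by move: hd; rewrite /f_num ed; congr (_ %| _)%Z; ring.
have m0 : 0 < m by clear -d0 ed; lia.
have [q q0 ->] := @den_multiple 4 4 _ _ _ _ isT m0 b0 isT N_odd mN hd4.
apply: multiple_bound => //; have := @le_sq 1 m isT m0; clear -ed m0; lia.
Qed.

(* d = 4n, n odd, n <> 1, p odd: f_num p d = 64 N with N = (p^2 - 29n^2)/4 odd. *)
Lemma f_den_val2 (p d b n s e : int) : 0 < d -> 0 < b -> coprimez p d ->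
  d = n * 4 -> n = e * 2 + 1 -> p = s * 2 + 1 -> d != 4 ->
  (16 * d ^+ 2 %| f_num p d * b)%Z -> d < b /\ b != 4.
Proof.
move=> d0 b0 pd ed en ps d4 hd.
have n3 : 3 <= n by move: d4; rewrite ed => /eqP; clear -d0 ed en; lia.
have [t st] := pronic_even s; have [t' et'] := pronic_even e.
pose N := (t - 29 * t' - 4) * 2 + 1.
have eN : N * 4 = p ^+ 2 - 29 * n ^+ 2.
  rewrite /N ps en.
  have -> : (s * 2 + 1) ^+ 2 = (s ^+ 2 + s) * 4 + 1 by ring.
  have -> : (e * 2 + 1) ^+ 2 = (e ^+ 2 + e) * 4 + 1 by ring.
  by rewrite st et'; ring.
have pn : coprimez p n by move: pd; rewrite ed coprimezMr => /andP[].
have nN : coprimez n N.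
  have : coprimez n (N * 4).
    rewrite eN; have -> : p ^+ 2 - 29 * n ^+ 2 = (-29 * n) * n + 1 * p ^+ 2 by ring.
    by apply: coprime_lin_sq; [rewrite /coprimez gcdz1 | rewrite coprimez_sym].
  by rewrite coprimezMr => /andP[].
have hd64 : (64 * (2 ^+ 2 * n ^+ 2) %| 64 * N * b)%Z.
  have fN : f_num p d = 16 * (N * 4) by rewrite eN /f_num ed; ring.
  by move: hd; rewrite fN ed; congr (_ %| _)%Z; ring.
have n0 : 0 < n by clear -n3; lia.
have [q q0 ->] := @den_multiple 64 2 _ _ _ _ isT n0 b0 isT erefl nN hd64.
apply: multiple_bound => //; have := @le_sq 3 n isT n3; clear -ed n3; lia.
Qed.

(* d = 8j, p odd: f_num p d = 16 (p^2 - 116 j^2), and the cofactor is odd. *)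
Lemma f_den_val3 (p d b j s : int) : 0 < d -> 0 < b -> coprimez p d ->
  d = j * 8 -> p = s * 2 + 1 -> (16 * d ^+ 2 %| f_num p d * b)%Z ->
  d < b /\ b != 4.
Proof.
move=> d0 b0 pd ed ps hd.
have [t st] := pronic_even s.
have pj : coprimez p j by move: pd; rewrite ed coprimezMr => /andP[].
have N_odd : p ^+ 2 - 116 * j ^+ 2 = (4 * t - 58 * j ^+ 2) * 2 + 1.
  have -> : p ^+ 2 = (s ^+ 2 + s) * 4 + 1 by rewrite ps; ring.
  by rewrite st; ring.
have jN : coprimez j (p ^+ 2 - 116 * j ^+ 2).
  have -> : p ^+ 2 - 116 * j ^+ 2 = (-116 * j) * j + 1 * p ^+ 2 by ring.
  by apply: coprime_lin_sq; [rewrite /coprimez gcdz1 | rewrite coprimez_sym].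
have hd16 : (16 * (2 ^+ 6 * j ^+ 2) %| 16 * (p ^+ 2 - 116 * j ^+ 2) * b)%Z.
  by move: hd; rewrite /f_num ed; congr (_ %| _)%Z; ring.
have j0 : 0 < j by clear -d0 ed; lia.
have [q q0 ->] := @den_multiple 16 6 _ _ _ _ isT j0 b0 isT N_odd jN hd16.
apply: multiple_bound => //; have := @le_sq 1 j isT j0; clear -ed j0; lia.
Qed.

Lemma f_den_grows (p d b : int) : 0 < d -> 0 < b -> coprimez p d -> d != 4 ->
  (16 * d ^+ 2 %| f_num p d * b)%Z -> d < b /\ b != 4.
Proof.
move=> d0 b0 pd d4.
have [ed|ed] : d = (d %/ 2)%Z * 2 + 1 \/ d = (d %/ 2)%Z * 2 by lia.
  exact: f_den_val0 ed.
set m := (d %/ 2)%Z in ed.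
have [em|em] : m = (m %/ 2)%Z * 2 + 1 \/ m = (m %/ 2)%Z * 2 by lia.
  exact: f_den_val1 ed em.
(* 4 divides d, so p is odd. *)
have [s ps] : exists s, p = s * 2 + 1.
  by apply: (@odd_of_coprime_even _ m); rewrite mulrC -ed.
set n := (m %/ 2)%Z in em.
have [en|en] : n = (n %/ 2)%Z * 2 + 1 \/ n = (n %/ 2)%Z * 2 by lia.
  have ed4 : d = n * 4 by rewrite ed em; ring.
  exact: f_den_val2 ed4 en ps d4.
have ed8 : d = (n %/ 2)%Z * 8 by rewrite ed em {1}en; ring.
exact: f_den_val3 ed8 ps.
Qed.

Lemma f_denq (x : rat) : denq x != 4 -> denq (f x) != 4 /\ denq x < denq (f x).
Proof.
move=> d4.
have E : numq (f x) * (16 * denq x ^+ 2) = f_num (numq x) (denq x) * denq (f x).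
  apply/eqP; rewrite -(eqr_int rat) /f_num !(rmorphM, rmorphB, rmorphXn) /=.
  rewrite !numqE /f !rmorph_nat.
  have dn : (denq x)%:~R != 0 :> rat by rewrite intr_eq0 denq_neq0.
  by apply/eqP; field.
have hd : (16 * denq x ^+ 2 %| f_num (numq x) (denq x) * denq (f x))%Z.
  by apply/dvdzP; exists (numq (f x)); rewrite -E.
have [grows ne4] := f_den_grows (denq_gt0 x) (denq_gt0 _) (coprime_num_den x) d4 hd.
by split.
Qed.

Lemma eventually_periodic_shape (x : rat) :
  periodic f x \/ preperiodic f x -> `|x| < 2 /\ denq x = 4.
Proof.
move=> ep; split.
  by rewrite ltNge; apply/negP => /(eventually_periodic_grow f_escape ep).
by apply/eqP/negP => /negP /(eventually_periodic_grow f_denq ep).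
Qed.

Definition cycle3 : seq rat := [:: - (1%:R / 4%:R); - (7%:R / 4%:R); 5%:R / 4%:R].
Definition tails5 : seq rat :=
  [:: 1%:R / 4%:R; 7%:R / 4%:R; - (5%:R / 4%:R); 3%:R / 4%:R; - (3%:R / 4%:R)].

Lemma quarter_candidates (x : rat) :
  `|x| < 2 -> denq x = 4 -> x \in cycle3 ++ tails5.
Proof.
move=> hx d4.
have ex : x = (numq x)%:~R / 4 by rewrite numqE d4 mulfK.
have num_bd : -8 < numq x < 8.
  move: hx; rewrite ltr_norml => /andP[lo hi]; rewrite ex in lo hi.
  by rewrite -!(ltr_int rat) rmorphN /=; apply/andP; split; lra.
have [s es] : exists s, numq x = s * 2 + 1.
  by apply: (@odd_of_coprime_even _ 2); have := coprime_num_den x; rewrite d4.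
have : numq x = -7 \/ numq x = -5 \/ numq x = -3 \/ numq x = -1 \/
       numq x = 1 \/ numq x = 3 \/ numq x = 5 \/ numq x = 7 by lia.
by move=> H; rewrite ex; case: H => [|[|[|[|[|[|[|]]]]]]] ->.
Qed.

Lemma cycle3_facts : all (fun y => (f y \in cycle3) && (iter 3 f y == y)) cycle3.
Proof. by vm_compute. Qed.

Lemma tails5_facts :
  all (fun y => [&& iter 2 f y \in cycle3, f y != y & y \notin cycle3]) tails5.
Proof. by vm_compute. Qed.

Lemma iter_cycle3 (y : rat) n : y \in cycle3 -> iter n f y \in cycle3.
Proof.
move=> y3; elim: n => [//|n IH] /=.
by have /andP[] := allP cycle3_facts _ IH.
Qed.

Lemma periodic_cycle3 (y : rat) : y \in cycle3 -> periodic f y.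
Proof.
by move=> y3; exists 3%N; have /andP[_ /eqP] := allP cycle3_facts _ y3.
Qed.

(* A point of tails5 is not periodic: it is not fixed, and any later return
   to it would put it in the invariant set cycle3. *)
Lemma not_periodic_tails5 (y : rat) : y \in tails5 -> ~ periodic f y.
Proof.
move=> y5 [n [n0 yn]]; have /and3P[y2 fy y3] := allP tails5_facts _ y5.
case: n n0 yn => [//|[_ yn|n _ yn]]; first by move: fy; rewrite -{2}yn eqxx.
have : iter (n + 2) f y \in cycle3 by rewrite iterD; apply: iter_cycle3.
by rewrite addn2 yn (negbTE y3).
Qed.

Lemma preperiodic_tails5 (y : rat) : y \in tails5 -> preperiodic f y.
Proof.
move=> y5; split; last exact: not_periodic_tails5.
exists 2%N; split=> //; apply: periodic_cycle3.
by have /and3P[] := allP tails5_facts _ y5.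
Qed.

Theorem corollary4 :
  (* the rational periodic points are exactly -1/4, -7/4, 5/4 *)
  (forall x : rat, periodic f x <->
     x \in [:: - (1%:R / 4%:R); - (7%:R / 4%:R); 5%:R / 4%:R]) /\
  (* and they form a 3-cycle *)
  (f (- (1%:R / 4%:R)) = - (7%:R / 4%:R) /\
   f (- (7%:R / 4%:R)) = 5%:R / 4%:R /\
   f (5%:R / 4%:R) = - (1%:R / 4%:R)) /\
  (* exactly 8 rational points are periodic or preperiodic *)
  (exists s : seq rat, uniq s /\ size s = 8%N /\
     forall x : rat, (periodic f x \/ preperiodic f x) <-> x \in s).
Proof.
have candidates x : periodic f x \/ preperiodic f x -> x \in cycle3 ++ tails5.
  by case/eventually_periodic_shape; apply: quarter_candidates.
split.
  move=> x; rewrite -/cycle3; split; last exact: periodic_cycle3.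
  move=> per; move: (candidates x (or_introl per)); rewrite mem_cat.
  by case/orP=> // /not_periodic_tails5.
split; first by split; [|split]; apply/eqP; vm_compute.
exists (cycle3 ++ tails5); split; first by vm_compute.
split=> // x; split; first exact: candidates.
rewrite mem_cat => /orP[/periodic_cycle3|/preperiodic_tails5]; tauto.
Qed.
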